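(* Let $h\in\mathbb{N}$, $h'\in[h+1]$, $\ell\in\mathbb{N}$ and let $G$ be a graph. Let $T=t_1\dots t_{(h+1)\ell+h'-1}$ be the $h$-th power of a path in $G$ (each vertex adjacent to the preceding $h$ vertices), and let $W$ be a set of vertices disjoint from $T$. Let $Q_1:=\{t_1,\dots,t_{h+1}\}$, $Q_i:=\{t_{(h+1)(i-2)+1},\dots,t_{(h+1)i}\}$ for $1<i\leq\ell$, and $Q_{\ell+1}:=\{t_{(h+1)\ell-h},\dots,t_{(h+1)\ell+h'-1}\}$. If there is a permutation $\sigma$ of $[\ell+1]$ such that for each $i\in[\ell+1]$ the vertices of $Q_{\sigma(i)}$ have at least $i$ common neighbours in $W$, then there are distinct $q_1,\dots,q_{\ell+1}\in W$ such that $(q_1t_1\dots t_{h+1})(q_2t_{h+2}\dots t_{2(h+1)})\dots(q_\ell t_{(h+1)\ell-h}\dots t_{(h+1)\ell})(q_{\ell+1}t_{(h+1)\ell+1}\dots t_{(h+1)\ell+h'-1})$ is (in this order) the $(h+1)$-th power of a path in $G$, using every vertex of $T$. If instead $T=t_1\dots t_{(h+1)\ell}$ is the $h$-th power of a cycle in $G$ and we set $Q_1:=\{t_{(h+1)\ell-h},\dots,t_{(h+1)\ell},t_1,\dots,t_{h+1}\}$, $Q_i:=\{t_{(h+1)(i-2)+1},\dots,t_{(h+1)i}\}$ for $1<i\leq\ell$, and there is a permutation $\sigma$ of $[\ell]$ such that for each $i\in[\ell]$ the vertices of $Q_{\sigma(i)}$ have at least $i$ common neighbours in $W$, then $G$ contains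 the $(h+1)$-th power of a cycle $C^{h+1}_{(h+2)\ell}$ (obtained by inserting distinct vertices $q_1,\dots,q_\ell\in W$ before each block $t_{(h+1)(i-1)+1}\dots t_{(h+1)i}$).
   Context: The $h$-th power of a path (cycle) $v_1\dots v_s$ is the graph on these vertices in which $v_i,v_j$ are adjacent whenever their distance along the path (cycle) is at most $h$. $C^{h+1}_{s}$ denotes the $(h+1)$-th power of a cycle on $s$ vertices. *)

From mathcomp Require Import all_boot all_fingroup.
Set Implicit Arguments. Unset Strict Implicit. Unset Printing Implicit Defensive.

Section Defs.
Variable V : finType.
Variable e : rel V.

Definition is_path_power (h : nat) (s : seq V) : Prop :=
  uniq s /\
  forall (x0 : V) (i j : nat), i < j -> j < size s -> j - i <= h ->
    e (nth x0 s i) (nth x0 s j).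

Definition is_cycle_power (h : nat) (s : seq V) : Prop :=
  uniq s /\
  forall (x0 : V) (i j : nat), i < j -> j < size s ->
    (j - i <= h) || (size s - (j - i) <= h) ->
    e (nth x0 s i) (nth x0 s j).

(* the segment t_lo ... t_hi (1-indexed), truncated to existing indices *)
Definition seg (t : seq V) (lo hi : nat) : seq V := drop lo.-1 (take hi t).

Definition Qpath (h h' l : nat) (t : seq V) (i : nat) : seq V :=
  if i == l.+1 then seg t ((h + 1) * l - h) ((h + 1) * l + h' - 1)
  else if i == 1 then seg t 1 (h + 1)
  else seg t ((h + 1) * (i - 2) + 1) ((h + 1) * i).

Definition Qcycle (h l : nat) (t : seq V) (i : nat) : seq V :=
  if i == 1 then seg t ((h + 1) * l - h) ((h + 1) * l) ++ seg t 1 (h + 1)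
  else seg t ((h + 1) * (i - 2) + 1) ((h + 1) * i).

Definition common_nbrs (W : {set V}) (Q : seq V) : {set V} :=
  [set w in W | all (fun x => e x w) Q].

(* q_1 t_1 .. t_{h+1} q_2 t_{h+2} .. t_{2(h+1)} ... q_k t_{(h+1)(k-1)+1} ...
   (the i-th block is t_{(h+1)(i-1)+1} .. t_{(h+1)i}, truncated to t) *)
Definition insert_vertices (h : nat) (q t : seq V) : seq V :=
  flatten [seq x.1 :: x.2 | x <- zip q
    [seq take (h + 1) (drop ((h + 1) * i) t) | i <- iota 0 (size q)]].

End Defs.

From mathcomp Require Import zify.
From mathcomp Require Import all_boot all_fingroup.
Set Implicit Arguments. Unset Strict Implicit. Unset Printing Implicit Defensive.

(* The hypothesis on sigma makes a greedy choice of distinct representatives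
   possible: pick q_{sigma(1)}, q_{sigma(2)}, ... in turn; when q_{sigma(i)} is
   chosen only i - 1 vertices are used and Q_{sigma(i)} has at least i common
   neighbours in W.  Inserting q_a in front of the a-th block of h + 1 vertices
   raises the power by one: two vertices at distance at most h + 1 in the new
   sequence are either two vertices of T whose distance has dropped to at most h
   (an inserted vertex lies between them), or q_a and a vertex of the previous
   or current block, i.e. a vertex of Q_a. *)

Lemma same_or_next_block m a b c d :
  b < m -> d < m -> a * m + b < c * m + d -> c * m + d <= a * m + b + m.-1 ->
  c = a \/ c = a.+1.
Proof. nia. Qed.

Lemma block_index_bounds h n m a b :
  (h + 1) * n.-1 <= m <= (h + 1) * n -> b < h + 2 -> a * (h + 2) + b < n + m ->
  a < n /\ (0 < b -> a * (h + 1) + b.-1 < m).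
Proof.
move=> bounds ltb lt_size.
have lt_a : a < n.
  rewrite ltnNge; apply/negP => le_na.
  have : n * (h + 2) <= a * (h + 2) by rewrite leq_mul2r le_na orbT.
  lia.
split=> // b_gt0.
case: (ltnP a.+1 n) => [ltSa|]; first nia.
lia.
Qed.

Lemma first_and_last_block m n a b c d :
  d < m -> c < n -> a * m + b < c * m + d -> n * m - (c * m + d - (a * m + b)) <= m.-1 ->
  a = 0 /\ c = n.-1.
Proof. nia. Qed.

Section DistinctRepresentatives.
Variable V : finType.

Lemma exists_uniq_transversal (L : seq {set V}) :
  (forall i, i < size L -> i < #|nth set0 L i|) ->
  exists r : seq V, [/\ size r = size L, uniq r &
    forall x0 i, i < size L -> nth x0 r i \in nth set0 L i].
Proof.
elim/last_ind: L => [|L A IH] large; first by exists [::].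
have [r [size_r uniq_r r_in]] : exists r : seq V, [/\ size r = size L, uniq r &
    forall x0 i, i < size L -> nth x0 r i \in nth set0 L i].
  apply: IH => i lti; have := large i.
  by rewrite size_rcons nth_rcons lti; apply; apply: ltnW.
have [x xA xNr] : exists2 x, x \in A & x \notin r.
  apply/subsetPn/negP => /subset_leq_card.
  have := large (size L); rewrite size_rcons nth_rcons ltnn eqxx => /(_ (ltnSn _)).
  by rewrite (card_uniqP uniq_r) size_r; case: leqP.
exists (rcons r x); split.
- by rewrite !size_rcons size_r.
- by rewrite rcons_uniq xNr uniq_r.
- move=> x0 i; rewrite size_rcons !nth_rcons size_r ltnS leq_eqVlt.
  by case/orP => [/eqP -> | lti]; [rewrite ltnn eqxx | rewrite lti r_in].
Qed.

Lemma exists_uniq_transversal_perm n (A : nat -> {set V}) (s : 'S_n) :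
  (forall i : 'I_n, i < #|A (s i)|) ->
  exists q : seq V, [/\ size q = n, uniq q &
    forall x0 k, k < n -> nth x0 q k \in A k].
Proof.
case: n s => [|n] s large; first by exists [::].
have [x0 _] := card_gt0P (large ord0).
pose L := mkseq (fun i => A (s (inord i))) n.+1.
have L_large i : i < size L -> i < #|nth set0 L i|.
  by rewrite size_mkseq => lti; rewrite nth_mkseq // -{1}(inordK lti).
have [r [size_r uniq_r r_in]] := exists_uniq_transversal L_large.
rewrite size_mkseq in size_r r_in.
pose f k := nth x0 r (s^-1 (inord k))%g.
exists (mkseq f n.+1); split.
- exact: size_mkseq.
- rewrite map_inj_in_uniq ?iota_uniq // => k1 k2; rewrite !mem_iota /= => ltk1 ltk2.
  move/eqP; rewrite /f nth_uniq ?size_r // => /eqP /val_inj /perm_inj eqk.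
  by rewrite -(inordK ltk1) -(inordK ltk2) eqk.
- move=> y0 k ltk; rewrite (set_nth_default x0) ?size_mkseq // nth_mkseq //.
  have := r_in x0 _ (ltn_ord (s^-1 (inord k))%g).
  by rewrite nth_mkseq // inord_val permKV inordK.
Qed.

Lemma uniq_cat_disjoint (W : {set V}) (q t : seq V) :
  uniq q -> uniq t -> {subset q <= W} -> [disjoint W & [pred x | x \in t]] ->
  uniq (q ++ t).
Proof.
move=> uniq_q uniq_t qW disj; rewrite cat_uniq uniq_q uniq_t andbT.
apply/hasPn => x xt; apply/negP => /qW xW.
by have := disjointFr disj xW; rewrite inE xt.
Qed.

Lemma common_nbrs_transversal (e : rel V) (e_sym : symmetric e) n
    (W : {set V}) (Q : nat -> seq V) (s : 'S_n) :
  (forall i : 'I_n, i < #|common_nbrs e W (Q (s i))|) ->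
  exists q : seq V, [/\ size q = n, uniq q, {subset q <= W} &
    forall x0 a x, a < n -> x \in Q a -> e (nth x0 q a) x].
Proof.
move=> large; have [q [size_q uniq_q q_in]] :=
  exists_uniq_transversal_perm (A := fun k => common_nbrs e W (Q k)) large.
exists q; split=> // [x /(nthP x) [a lt_a <-] | x0 a x lt_a xQ].
  by have := q_in x a; rewrite inE -size_q => /(_ lt_a) /andP[].
by have := q_in x0 a lt_a; rewrite inE => /andP[_ /allP/(_ x xQ)]; rewrite e_sym.
Qed.

End DistinctRepresentatives.

Section InsertVertices.
Variable V : finType.

Lemma insert_vertices_cons h (x : V) q t :
  insert_vertices h (x :: q) t =
  x :: take (h + 1) t ++ insert_vertices h q (drop (h + 1) t).
Proof.
rewrite /insert_vertices /= muln0 drop0 -[in iota 1 _](addn0 1) iotaDl -map_comp.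
do 4 f_equal; apply: (congr1 (zip q)); apply: eq_map => i /=.
by rewrite drop_drop; congr (take _ (drop _ t)); lia.
Qed.

Lemma perm_insert_vertices h (q t : seq V) :
  (h + 1) * (size q).-1 <= size t <= (h + 1) * size q ->
  perm_eq (insert_vertices h q t) (q ++ t).
Proof.
elim: q t => [|x q IH] t /= bounds; first by case: t bounds => //= y t; lia.
rewrite insert_vertices_cons perm_cons.
apply: (@perm_trans _ (take (h + 1) t ++ (q ++ drop (h + 1) t))).
  by rewrite perm_cat2l IH // size_drop; case: q {IH} bounds => [|y q] /=; lia.
by rewrite perm_catCA cat_take_drop.
Qed.

Lemma size_insert_vertices h (q t : seq V) :
  (h + 1) * (size q).-1 <= size t <= (h + 1) * size q ->
  size (insert_vertices h q t) = size q + size t.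
Proof. by move/perm_insert_vertices/perm_size; rewrite size_cat. Qed.

Lemma nth_insert_vertices h (q t : seq V) x0 a b :
  (h + 1) * (size q).-1 <= size t <= (h + 1) * size q ->
  b < h + 2 -> a * (h + 2) + b < size q + size t ->
  nth x0 (insert_vertices h q t) (a * (h + 2) + b) =
  if b == 0 then nth x0 q a else nth x0 t (a * (h + 1) + b.-1).
Proof.
elim: q t a => [|x q IH] t a /= bounds ltb lt_size; first lia.
have [lt_a lt_b] := block_index_bounds bounds ltb lt_size.
rewrite insert_vertices_cons.
case: a lt_a lt_b lt_size => [_ lt_b _ | a lt_a lt_b lt_size].
  case: b {IH} ltb lt_b => [|b] //= ltb /(_ isT) lt_b.
  have lt_take : b < size (take (h + 1) t) by rewrite size_take; case: ifP => _; lia.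
  by rewrite nth_cat lt_take nth_take //; lia.
have lth_t : h + 1 <= size t by nia.
have -> : a.+1 * (h + 2) + b = (h + 1 + (a * (h + 2) + b)).+1 by lia.
rewrite /= nth_cat size_takel // ltnNge leq_addr addKn IH ?size_drop //.
- by case: eqP => // _; rewrite nth_drop; congr nth; lia.
- nia.
- lia.
Qed.

End InsertVertices.

Section PowerLemmas.
Variables (V : finType) (e : rel V).
Hypothesis e_sym : symmetric e.

Lemma cycle_power_path_power h (s : seq V) :
  is_cycle_power e h s -> is_path_power e h s.
Proof. by case=> uniq_s adj; split=> // x0 i j ltij ltj dist; rewrite adj ?dist. Qed.

(* For a = 0 the truncated [a - 1] makes the window of q_0 the first block. *)
Lemma insert_vertices_path_power h (q t : seq V) :
  (h + 1) * (size q).-1 <= size t <= (h + 1) * size q ->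
  uniq (q ++ t) -> is_path_power e h t ->
  (forall x0 a k, a < size q -> k < size t ->
     (h + 1) * (a - 1) <= k < (h + 1) * a.+1 -> e (nth x0 q a) (nth x0 t k)) ->
  is_path_power e (h + 1) (insert_vertices h q t).
Proof.
move=> bounds uniq_qt [_ t_adj] q_adj.
split=> [|x0 i j]; first by rewrite (perm_uniq (perm_insert_vertices bounds)).
rewrite size_insert_vertices //; have pos : 0 < h + 2 by rewrite addn2.
case: (edivnP i (h + 2)) => a b ->; rewrite pos /= => ltb.
case: (edivnP j (h + 2)) => c d ->; rewrite pos /= => ltd ltij ltj dist.
have [lt_a lt_b] := block_index_bounds bounds ltb (ltn_trans ltij ltj).
have [lt_c lt_d] := block_index_bounds bounds ltd ltj.
rewrite !nth_insert_vertices //; last exact: ltn_trans ltij ltj.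
have [|] : c = a \/ c = a.+1 by apply: (same_or_next_block ltb ltd ltij); lia.
all: move=> eq_c; subst c.
all: case: b ltb ltij dist lt_b => [|b] ltb ltij dist lt_b.
all: case: d ltd ltj ltij dist lt_d => [|d] ltd ltj ltij dist lt_d /=.
- by rewrite ltnn in ltij.
- by apply: q_adj; rewrite ?lt_d //; nia.
- by exfalso; lia.
- by apply: t_adj; rewrite ?lt_d //; nia.
- by exfalso; nia.
- by exfalso; nia.
- by rewrite e_sym; apply: q_adj; rewrite ?lt_b //; nia.
- by apply: t_adj; rewrite ?lt_d //; nia.
Qed.

Lemma insert_vertices_cycle_power h (q t : seq V) :
  size t = (h + 1) * size q ->
  uniq (q ++ t) -> is_cycle_power e h t ->
  (forall x0 a k, a < size q -> k < size t ->
     (h + 1) * (a - 1) <= k < (h + 1) * a.+1 \/ a = 0 /\ (h + 1) * (size q).-1 <= k ->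
     e (nth x0 q a) (nth x0 t k)) ->
  is_cycle_power e (h + 1) (insert_vertices h q t).
Proof.
move=> size_t uniq_qt t_cyc q_adj.
have bounds : (h + 1) * (size q).-1 <= size t <= (h + 1) * size q.
  by rewrite size_t leqnn andbT leq_mul2l leq_pred orbT.
have [uniq_ins ins_adj] := insert_vertices_path_power bounds uniq_qt
  (cycle_power_path_power t_cyc)
  (fun x0 a k lt_a lt_k win => q_adj x0 a k lt_a lt_k (or_introl win)).
split=> // x0 i j ltij ltj /orP[near | wrap]; first exact: ins_adj.
move: ltij ltj wrap; rewrite size_insert_vertices //.
have pos : 0 < h + 2 by rewrite addn2.
case: (edivnP i (h + 2)) => a b ->; rewrite pos /= => ltb.
case: (edivnP j (h + 2)) => c d ->; rewrite pos /= => ltd ltij ltj wrap.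
have [lt_a lt_b] := block_index_bounds bounds ltb (ltn_trans ltij ltj).
have [lt_c lt_d] := block_index_bounds bounds ltd ltj.
rewrite !nth_insert_vertices //; last exact: ltn_trans ltij ltj.
have [a0 c_last] : a = 0 /\ c = (size q).-1.
  by apply: (first_and_last_block ltd lt_c ltij); nia.
subst a c.
case: b ltb ltij wrap lt_b => [|b] ltb ltij wrap lt_b.
all: case: d ltd ltj ltij wrap lt_d => [|d] ltd ltj ltij wrap lt_d /=.
- by exfalso; rewrite size_t in wrap; nia.
- by apply: q_adj; rewrite ?lt_d //; right; split=> //; nia.
- by exfalso; rewrite size_t in wrap; nia.
- by apply: t_cyc.2; rewrite ?lt_d //; rewrite size_t in wrap *; nia.
Qed.
End PowerLemmas.

Section Segments.
Variable V : finType.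

Lemma mem_seg (t : seq V) lo hi k x0 :
  lo.-1 <= k < hi -> k < size t -> nth x0 t k \in seg t lo hi.
Proof.
move=> /andP[le_lo lt_hi] lt_k.
have lt_take : k < size (take hi t) by rewrite size_take; case: ifP.
rewrite /seg -(nth_take x0 lt_hi) -(subnKC le_lo) -nth_drop; apply: mem_nth.
by rewrite size_drop ltn_sub2r // (leq_ltn_trans le_lo).
Qed.

Lemma mem_Qpath h h' l (t : seq V) x0 a k :
  size t = (h + 1) * l + h' - 1 -> a <= l -> k < size t ->
  (h + 1) * (a - 1) <= k < (h + 1) * a.+1 -> nth x0 t k \in Qpath h h' l t a.+1.
Proof.
move=> size_t le_a lt_k win; rewrite /Qpath.
case: eqP => [[a_l] | _]; first by apply: mem_seg; nia.
by case: eqP => [[a0] | a_gt0]; apply: mem_seg; nia.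
Qed.

Lemma mem_Qcycle h l (t : seq V) x0 a k :
  size t = (h + 1) * l -> a < l -> k < size t ->
  (h + 1) * (a - 1) <= k < (h + 1) * a.+1 \/ a = 0 /\ (h + 1) * l.-1 <= k ->
  nth x0 t k \in Qcycle h l t a.+1.
Proof.
move=> size_t lt_a lt_k win; rewrite /Qcycle.
case: ifP => [/eqP a0 | a_gt0]; last by apply: mem_seg; case: win; nia.
rewrite mem_cat; case: (ltnP k (h + 1)) => lt_kh; apply/orP; [right | left].
  by apply: mem_seg; nia.
by apply: mem_seg; case: win; nia.
Qed.

End Segments.

Theorem lemma7p1 (V : finType) (e : rel V) (e_sym : symmetric e)
  (e_irr : irreflexive e) (h l : nat) :
  (forall (h' : nat) (t : seq V) (W : {set V}),
     1 <= h' <= h + 1 ->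
     size t = (h + 1) * l + h' - 1 ->
     is_path_power e h t ->
     [disjoint W & [pred x | x \in t]] ->
     (exists s : 'S_(l.+1), forall i : 'I_(l.+1),
        i.+1 <= #|common_nbrs e W (Qpath h h' l t (s i).+1)|) ->
     exists q : seq V,
       [/\ size q = l.+1, uniq q, {subset q <= W} &
           is_path_power e (h + 1) (insert_vertices h q t)])
  /\
  (forall (t : seq V) (W : {set V}),
     size t = (h + 1) * l ->
     is_cycle_power e h t ->
     [disjoint W & [pred x | x \in t]] ->
     (exists s : 'S_l, forall i : 'I_l,
        i.+1 <= #|common_nbrs e W (Qcycle h l t (s i).+1)|) ->
     exists q : seq V,
       [/\ size q = l, uniq q, {subset q <= W} &
           is_cycle_power e (h + 1) (insert_vertices h q t)]).
Proof.
split.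
- move=> h' t W h'_range size_t t_pow disj [s large].
  have [q [size_q uniq_q qW q_adj]] :=
    common_nbrs_transversal e_sym (Q := fun k => Qpath h h' l t k.+1) large.
  exists q; split=> //; apply: insert_vertices_path_power => //.
  + by rewrite size_t size_q; nia.
  + exact: uniq_cat_disjoint uniq_q t_pow.1 qW disj.
  + rewrite size_q => x0 a k lt_a lt_k win.
    by apply: q_adj => //; apply: mem_Qpath.
- move=> t W size_t t_cyc disj [s large].
  have [q [size_q uniq_q qW q_adj]] :=
    common_nbrs_transversal e_sym (Q := fun k => Qcycle h l t k.+1) large.
  exists q; split=> //; apply: insert_vertices_cycle_power => //.
  + by rewrite size_t size_q.
  + exact: uniq_cat_disjoint uniq_q t_cyc.1 qW disj.
  + rewrite size_q => x0 a k lt_a lt_k win.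
    by apply: q_adj => //; apply: mem_Qcycle.
Qed.
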